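(* For every $x\in W_1$ one has $J\mathfrak{e}^L_xJ^{-1}=-q\,\mathfrak{i}^R_x$. Consequently, for $v\in W_{k+1}$ and $\underline i\in\Lambda_k$, $$(\mathfrak{i}^R_xv)_{\underline i}=\sum_{j\notin\underline i}(-q)^{L(j,\underline i\cup j)-1}\,\overline{x_j}\,v_{\underline i\cup j},$$ where $L(j,\underline i')$ denotes the position of $j$ in the string $\underline i'$.
   Context: $0<q<1$, $\ell\ge2$. $\Lambda_k$ = strictly increasing $k$-tuples in $\{1,\dots,\ell\}$, $W_k=\mathbb{C}^{\Lambda_k}$ ($W_0=\mathbb{C}$), inner product $\langle v,w\rangle=\sum_{\underline i}\overline{v_{\underline i}}w_{\underline i}$. For $\underline i'$ disjoint from $\underline i$, $\underline i\cup\underline i'$ is the ordered union; $\underline i\setminus j$ removes $j$; $|\underline i|=\sum_r i_r$; $\underline i^c$ is the complementary increasing tuple. Product $\wedge_q:W_h\otimes W_k\to W_{h+k}$ (zero if $h+k>\ell$): $(v\wedge_qw)_{\underline i}=\sum_{p}(-q^{-1})^{\|p\|}v_{i_{p(1)},\dots,i_{p(h)}}w_{i_{p(h+1)},\dots,i_{p(h+k)}}$, sum over permutations $p$ of $\{1,\dots,h+k\}$ increasing on $\{1..h\}$ and on $\{h+1..h+k\}$, $\|p\|$ = number of inversions (e.g. for $x\in W_1$, $w\in W_k$: $(x\wedge_q w)_{\underline i}=\sum_r(-q)^{1-r}x_{i_r}w_{\underline i\setminus i_r}$). For $x\in W_1$: $\mathfrak{e}^L_xw=x\wedge_qw$ and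 $\mathfrak{e}^R_xw=(-q)^kw\wedge_qx$ for $w\in W_k$; $\mathfrak{i}^R_x$ is the adjoint of $\mathfrak{e}^R_x$. $J:W_k\to W_{\ell-k}$ is the antilinear map $(Jw)_{\underline i}=(-q^{-1})^{|\underline i|}q^{\frac14\ell(\ell+1)}\overline{w_{\underline i^c}}$, and $J,\mathfrak{e}^L_x,\mathfrak{i}^R_x$ are regarded as operators on $\bigoplus_{k=0}^\ell W_k$. *)

From HB Require Import structures.
From mathcomp Require Import all_boot all_order all_algebra.
From mathcomp Require Import complex.
From mathcomp Require Import reals.

Set Implicit Arguments.
Unset Strict Implicit.
Unset Printing Implicit Defensive.

Import Order.TTheory GRing.Theory Num.Theory.
Local Open Scope ring_scope.

(* The index set {1,...,l} is encoded by 'I_l, the element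
   j : 'I_l standing for the integer j+1.  A strictly increasing k-tuple
   in {1,...,l} is encoded by the subset {set 'I_l} of its entries (of
   cardinality k).  The space  \bigoplus_{k=0}^l W_k  is therefore the space of
   all functions {set 'I_l} -> R[i], and W_k is the subspace of functions
   supported on sets of cardinality k. *)

Definition Wsp (R : realType) (l : nat) := {set 'I_l} -> R[i].

Definition cR (R : realType) (a : R) : R[i] := (a%:C)%C.

Definition wt (l : nat) (S : {set 'I_l}) : nat := \sum_(j in S) (j.+1).

(* L(j, S) : position (1-based) of j in the increasing string S. *)
Definition pos (l : nat) (j : 'I_l) (S : {set 'I_l}) : nat :=
  #|[set i in S | (i <= j)%N]|.

(* Number of inversions ||p|| of the shuffle permutation p whose first block
   is A and second block is B: pairs (a,b), a in A, b in B, a > b. *)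
Definition ninv (l : nat) (A B : {set 'I_l}) : nat :=
  #|[set ab in setX A B | (ab.2 < ab.1)%N]|.

Definition wedgeq (R : realType) (l : nat) (q : R) (v w : Wsp R l) : Wsp R l :=
  fun S => \sum_(A : {set 'I_l} | A \subset S)
     (- cR q^-1) ^+ ninv A (S :\: A) * v A * w (S :\: A).

Definition W1 (R : realType) (l : nat) (x : 'I_l -> R[i]) : Wsp R l :=
  fun S => if #|S| == 1%N then \sum_(j in S) x j else 0.

Definition projW (R : realType) (l : nat) (k : nat) (w : Wsp R l) : Wsp R l :=
  fun S => if #|S| == k then w S else 0.

Definition eL (R : realType) (l : nat) (q : R) (x : 'I_l -> R[i]) (w : Wsp R l)
  : Wsp R l := wedgeq q (W1 x) w.

Definition eR (R : realType) (l : nat) (q : R) (x : 'I_l -> R[i]) (w : Wsp R l)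
  : Wsp R l :=
  fun S => \sum_(k < l.+1) (- cR q) ^+ k * wedgeq q (projW k w) (W1 x) S.

Definition inner (R : realType) (l : nat) (v w : Wsp R l) : R[i] :=
  \sum_(S : {set 'I_l}) Num.conj (v S) * w S.

Definition basisW (R : realType) (l : nat) (T : {set 'I_l}) : Wsp R l :=
  fun S => if S == T then 1 else 0.

(* Adjoint of a (linear) operator w.r.t. <.,.>: the conjugate transpose of
   its matrix in the standard orthonormal basis. *)
Definition adjoint (R : realType) (l : nat) (f : Wsp R l -> Wsp R l)
  : Wsp R l -> Wsp R l :=
  fun v T => \sum_(S : {set 'I_l}) Num.conj (f (@basisW R l T) S) * v S.

Definition iR (R : realType) (l : nat) (q : R) (x : 'I_l -> R[i])
  : Wsp R l -> Wsp R l := adjoint (eR q x).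

(* J : (Jw)_S = (-q^{-1})^{|S|} q^{l(l+1)/4} conj(w_{S^c});
   q^{1/4} is the positive fourth root sqrt(sqrt q). *)
Definition Jop (R : realType) (l : nat) (q : R) (w : Wsp R l) : Wsp R l :=
  fun S => (- cR q^-1) ^+ wt S * cR (Num.sqrt (Num.sqrt q)) ^+ (l * l.+1)
           * Num.conj (w (~: S)).

From HB Require Import structures.
From mathcomp Require Import all_boot all_order all_algebra.
From mathcomp Require Import complex.
From mathcomp Require Import reals.
From mathcomp Require Import ring zify.
From Stdlib Require Import FunctionalExtensionality.

(* The coordinate of e^L_x w at T removes one index j of T, with the sign
   (-q^-1)^(#{b in T | b < j}).  Dually, e^R_x maps a basis vector e_I to
   (-q)^|I| (-q^-1)^(#{i in I | j < i}) x_j e_(I+j), so its adjoint i^R_x adds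
   an index j to I with weight (-q)^(#{i in I | i < j}) conj(x_j), which is
   the explicit formula.  Conjugating by J replaces T by its complement; as
   wt (j + S) = j + 1 + wt S and the j indices below j split between S and its
   complement, the powers of -q^-1 produced by J and by e^L_x recombine into
   those of i^R_x up to a single factor -q.  Finally J (J w) is w scaled by a
   nonzero real invariant under complementation, so J is bijective. *)

Set Implicit Arguments.
Unset Strict Implicit.
Unset Printing Implicit Defensive.

Import Order.TTheory GRing.Theory Num.Theory.
Local Open Scope ring_scope.

Section Counting.

Variable l : nat.
Implicit Types (S I A B : {set 'I_l}) (j : 'I_l).

Definition nbelow S j : nat := #|[set i in S | (i < j)%N]|.
Definition nabove S j : nat := #|[set i in S | (j < i)%N]|.

Lemma card_ord_ltn n : (n <= l)%N -> #|[set i : 'I_l | (i < n)%N]| = n.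
Proof.
move=> le_nl.
have -> : [set i : 'I_l | (i < n)%N] = [set widen_ord le_nl i | i in 'I_n].
  apply/setP => i; rewrite inE; apply/idP/imsetP => [lt_in | [k _ ->]].
    by exists (Ordinal lt_in) => //; apply: val_inj.
  exact: (ltn_ord k).
by rewrite card_imset ?card_ord // => a b /(congr1 val) /= /val_inj.
Qed.

Lemma nbelowD1 S j : nbelow (S :\ j) j = nbelow S j.
Proof.
apply: eq_card => i; rewrite !inE.
by case: eqVneq => [->|]; rewrite ?ltnn ?andbF.
Qed.

Lemma nbelow_setC S j : (nbelow (~: S) j + nbelow S j)%N = j.
Proof.
rewrite -[RHS](card_ord_ltn (ltnW (ltn_ord j))) -(cardsID S) addnC.
by congr (_ + _)%N; apply: eq_card => i; rewrite !inE andbC.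
Qed.

Lemma nbelow_nabove I j : j \notin I -> (nbelow I j + nabove I j)%N = #|I|.
Proof.
move=> jI; rewrite -(cardsID [set i : 'I_l | (i < j)%N] I).
congr (_ + _)%N; apply: eq_card => i; rewrite !inE; first by rewrite andbC.
rewrite -leqNgt; case: (boolP (i \in I)) => iI; rewrite ?andbF ?andbT //=.
apply/idP/idP => [/ltnW // |]; rewrite leq_eqVlt => /orP[/eqP/ord_inj eq_ji | //].
by move: jI; rewrite eq_ji iI.
Qed.

Lemma ninv_set1l j B : ninv [set j] B = nbelow B j.
Proof.
have inj_pair : injective (fun b : 'I_l => (j, b)) by move=> a b [].
rewrite /ninv /nbelow -(card_imset _ inj_pair).
apply: eq_card => -[a b]; rewrite !inE /=; apply/idP/imsetP.
- by case/andP => /andP[/eqP -> bB] lt_bj; exists b; rewrite // inE bB.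
- by case=> b'; rewrite inE => /andP[bB lt_bj] [-> ->]; rewrite eqxx bB.
Qed.

Lemma ninv_set1r A j : ninv A [set j] = nabove A j.
Proof.
have inj_pair : injective (fun a : 'I_l => (a, j)) by move=> a b [].
rewrite /ninv /nabove -(card_imset _ inj_pair).
apply: eq_card => -[a b]; rewrite !inE /=; apply/idP/imsetP.
- by case/andP => /andP[aA /eqP ->] lt_ja; exists a; rewrite // inE aA.
- by case=> a'; rewrite inE => /andP[aA lt_ja] [-> ->]; rewrite eqxx aA.
Qed.

Lemma pos_setU1 I j : j \notin I -> pos j (j |: I) = (nbelow I j).+1.
Proof.
move=> jI; rewrite /pos /nbelow.
have -> : [set i in j |: I | (i <= j)%N] = j |: [set i in I | (i < j)%N].
  apply/setP => i; rewrite !inE; case: (eqVneq i j) => [->|ne_ij] /=.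
    by rewrite leqnn.
  by rewrite ltn_neqAle (ne_ij : val i != val j).
by rewrite cardsU1 inE ltnn andbF.
Qed.

Lemma wt_setU1 S j : j \notin S -> wt (j |: S) = (j.+1 + wt S)%N.
Proof. by move=> jS; rewrite /wt big_setU1. Qed.

Lemma setCU1 S j : ~: (j |: S) = ~: S :\ j.
Proof. by apply/setP => i; rewrite !inE negb_or andbC. Qed.

Lemma subset_setD_eq1 I S j :
  (I \subset S) && (S :\: I == [set j]) = (j \notin I) && (S == j |: I).
Proof.
apply/idP/idP.
- case/andP => sIS /eqP SDI.
  have : j \in S :\: I by rewrite SDI set11.
  rewrite inE => /andP[-> jS] /=; apply/eqP/setP => i; rewrite in_setU1.
  case: (boolP (i \in I)) => iI; first by rewrite orbT (subsetP sIS).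
  by rewrite orbF -in_set1 -SDI inE iI.
- case/andP => jI /eqP ->; rewrite subsetUr; apply/eqP/setP => i.
  by rewrite !inE; case: eqVneq => [->|_] /=; rewrite ?jI ?andNb.
Qed.

End Counting.

Lemma sumr_supp1 (V : nmodType) (T : finType) (P : pred T) (a : T) (F : T -> V) :
  (forall A, P A -> A != a -> F A = 0) ->
  \sum_(A | P A) F A = if P a then F a else 0.
Proof.
move=> F0; case Pa: (P a).
  by rewrite (bigD1 a) //= big1 ?addr0 // => A /andP[]; exact: F0.
by rewrite big1 // => A PA; apply: (F0 _ PA); apply: contraFneq Pa => <-.
Qed.

Section Operators.

Variables (R : realType) (l : nat) (q : R).
Implicit Types (x : 'I_l -> R[i]) (v w : Wsp R l) (S T I : {set 'I_l}).

Local Notation c := (- cR q^-1).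
Local Notation d := (- cR q).

Lemma conj_cR (a : R) : Num.conj (cR a) = cR a.
Proof. by apply: conj_Creal; rewrite /cR complex_real. Qed.

Lemma NcRV_mulNcR : q != 0 -> c * d = 1.
Proof. by move=> q_neq0; rewrite mulrNN /cR -rmorphM mulVf // rmorph1. Qed.

Lemma W1E x T : W1 x T = \sum_j (if T == [set j] then x j else 0).
Proof.
rewrite /W1; case: ifP => [/cards1P [y ->] | T_not1].
  rewrite big_set1 (sumr_supp1 (a := y)) ?eqxx // => j _ ne_jy.
  by case: eqP => // /set1_inj eq_yj; rewrite eq_yj eqxx in ne_jy.
by rewrite big1 // => j _; case: eqP => // eq_T; rewrite eq_T cards1 in T_not1.
Qed.

Lemma wedgeq_W1l x w T :
  wedgeq q (W1 x) w T = \sum_(j in T) c ^+ nbelow T j * x j * w (T :\ j).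
Proof.
rewrite /wedgeq.
under eq_bigr => A _ do rewrite W1E mulr_sumr mulr_suml.
rewrite exchange_big [RHS]big_mkcond; apply: eq_bigr => j _.
rewrite (sumr_supp1 (a := [set j])); last first.
  by move=> A _ /negbTE ->; rewrite mulr0 mul0r.
by rewrite sub1set eqxx ninv_set1l nbelowD1.
Qed.

Lemma wedgeq_basisWl I w S :
  wedgeq q (@basisW R l I) w S =
  if I \subset S then c ^+ ninv I (S :\: I) * w (S :\: I) else 0.
Proof.
rewrite /wedgeq (sumr_supp1 (a := I)) /basisW ?eqxx ?mulr1 //.
by move=> A _ /negbTE ->; rewrite mulr0 mul0r.
Qed.

Lemma eR_basisW_wedge x I S :
  eR q x (@basisW R l I) S = d ^+ #|I| * wedgeq q (@basisW R l I) (W1 x) S.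
Proof.
have ltI : (#|I| < l.+1)%N by rewrite ltnS (leq_trans (max_card _)) ?card_ord.
rewrite /eR (sumr_supp1 (a := Ordinal ltI)) /=; last first.
  move=> k _ ne_kI; rewrite /wedgeq big1 ?mulr0 // => A _; rewrite /projW /basisW.
  case: eqP => [eqA | _]; last by rewrite mulr0 mul0r.
  case: eqP => [eqAI | _]; last by rewrite mulr0 mul0r.
  by case/eqP: ne_kI; apply: val_inj; rewrite /= -eqA eqAI.
congr (_ * _); apply: eq_bigr => A _; congr (_ * _ * _).
by rewrite /projW /basisW; case: (eqVneq A I) => [->|_]; rewrite ?eqxx ?if_same.
Qed.

Lemma eR_basisW x I S :
  eR q x (@basisW R l I) S =
  \sum_(j | j \notin I)
     (if S == j |: I then d ^+ #|I| * c ^+ nabove I j * x j else 0).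
Proof.
rewrite eR_basisW_wedge wedgeq_basisWl; case: ifP => sIS; last first.
  rewrite mulr0 big1 // => j jI; case: eqP => // eqS.
  by have := subset_setD_eq1 I S j; rewrite sIS jI eqS eqxx.
rewrite W1E !mulr_sumr [RHS]big_mkcond; apply: eq_bigr => j _.
have := subset_setD_eq1 I S j; rewrite sIS /=.
case: eqVneq => [SDI | _] /esym cond; last first.
  by rewrite !mulr0; case: (j \notin I) cond => //= ->.
by case/andP: cond => -> /eqP SU; rewrite SDI ninv_set1r SU eqxx mulrA.
Qed.

Lemma iRE x v I : q != 0 ->
  iR q x v I =
  \sum_(j | j \notin I) d ^+ nbelow I j * Num.conj (x j) * v (j |: I).
Proof.
move=> q_neq0; rewrite /iR /adjoint.
under eq_bigr => S _ do rewrite eR_basisW rmorph_sum mulr_suml.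
rewrite exchange_big /=; apply: eq_bigr => j jI.
rewrite (sumr_supp1 (a := j |: I)) ?eqxx; last first.
  by move=> S _ /negbTE ->; rewrite rmorph0 mul0r.
rewrite !rmorphM !rmorphXn !rmorphN /= !conj_cR -(nbelow_nabove jI) exprD.
rewrite -(mulrA (d ^+ nbelow I j) (d ^+ nabove I j)) -exprMn (mulrC d).
by rewrite NcRV_mulNcR // expr1n mulr1.
Qed.

Lemma Jop_eL x w S : q != 0 -> Jop q (eL q x w) S = d * iR q x (Jop q w) S.
Proof.
move=> q_neq0; rewrite iRE // /Jop /eL wedgeq_W1l rmorph_sum !mulr_sumr.
apply: eq_big => [j | j]; rewrite inE // => jS.
rewrite setCU1 wt_setU1 // !rmorphM !rmorphXn !rmorphN /= !conj_cR.
have -> : (j.+1 + wt S = wt S + nbelow (~: S) j + (nbelow S j).+1)%N.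
  by have := nbelow_setC S j; lia.
have cd_pow : c ^+ (nbelow S j).+1 * d ^+ (nbelow S j).+1 = 1.
  by rewrite -exprMn NcRV_mulNcR // expr1n.
by rewrite -[LHS]mul1r -cd_pow !exprD !exprS; ring.
Qed.

(* In fact J2coef S = (-1)^(l(l+1)/2); we only use that it is a nonzero real
   number invariant under complementation. *)
Definition J2coef S : R[i] :=
  c ^+ (wt S + wt (~: S)) * cR (Num.sqrt (Num.sqrt q)) ^+ (2 * (l * l.+1)).

Lemma Jop_Jop w S : Jop q (Jop q w) S = J2coef S * w S.
Proof.
rewrite /Jop /J2coef setCK !rmorphM !rmorphXn !rmorphN /= !conj_cR conjCK.
by rewrite exprD mul2n -addnn exprD; ring.
Qed.

Lemma conj_J2coef S : Num.conj (J2coef S) = J2coef S.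
Proof. by rewrite /J2coef !rmorphM !rmorphXn !rmorphN /= !conj_cR. Qed.

Lemma J2coef_setC S : J2coef (~: S) = J2coef S.
Proof. by rewrite /J2coef setCK addnC. Qed.

Lemma J2coef_neq0 S : 0 < q -> J2coef S != 0.
Proof.
move=> q_gt0; have q_neq0 := lt0r_neq0 q_gt0.
rewrite mulf_neq0 // expf_neq0 //; last by rewrite /cR fmorph_eq0 lt0r_neq0 // !sqrtr_gt0.
have /eqP := NcRV_mulNcR q_neq0; apply: contraTneq => ->.
by rewrite mul0r eq_sym oner_eq0.
Qed.

Lemma Jop_scale (e : {set 'I_l} -> R[i]) v S :
  Jop q (fun T => e T * v T) S = Num.conj (e (~: S)) * Jop q v S.
Proof. by rewrite /Jop rmorphM; ring. Qed.

Lemma Jop_bij : 0 < q -> bijective (@Jop R l q).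
Proof.
move=> q_gt0; exists (fun w S => (J2coef S)^-1 * Jop q w S) => w.
  apply: functional_extensionality => S.
  by rewrite Jop_Jop mulrA mulVf ?mul1r // J2coef_neq0.
apply: functional_extensionality => S.
rewrite Jop_scale fmorphV /= conj_J2coef J2coef_setC Jop_Jop.
by rewrite mulrA mulVf ?mul1r // J2coef_neq0.
Qed.

End Operators.

Theorem proposition3p11 (R : realType) (q : R) (l : nat)
  (hq0 : 0 < q) (hq1 : q < 1) (hl : (2 <= l)%N) (x : 'I_l -> R[i]) :
  bijective (@Jop R l q) /\
  (forall (w : Wsp R l) (S : {set 'I_l}),
      Jop q (eL q x w) S = - cR q * iR q x (Jop q w) S) /\
  (forall (k : nat) (v : Wsp R l) (I : {set 'I_l}),
      (forall T : {set 'I_l}, #|T| != k.+1 -> v T = 0) ->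
      #|I| = k ->
      iR q x v I =
        \sum_(j : 'I_l | j \notin I)
           (- cR q) ^+ (pos j (j |: I)).-1 * Num.conj (x j) * v (j |: I)).
Proof.
have q_neq0 : q != 0 by rewrite lt0r_neq0.
split; first exact: Jop_bij.
split=> [w S | k v I _ _]; first exact: Jop_eL.
by rewrite iRE //; apply: eq_bigr => j jI; rewrite pos_setU1.
Qed.
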